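(* Let $D_n$, colored towers and bottoms be as in the context. For all integers $n,m,r\ge 0$ there is a bijection $$((\mathcal{T}^s,\mathcal{B}^w),(m,r),D_n)\simeq ((\mathcal{T}^s,\mathcal{T}^w),(m,r),D_{n-r}).$$
   Context: A Dyck path of length $2n$ is a lattice path from $(0,0)$ to $(2n,0)$ with steps $U=(1,1)$ and $D=(1,-1)$ never going below the $x$-axis. An elevated Dyck path is a path $U\bar pD$ with $\bar p$ a Dyck path; $D_n$ denotes the set of elevated Dyck paths of length $2n+2$. For a path $p$ (a word in $U,D$), a tower is an occurrence of a factor $t=U^iD^i$ ($i\ge1$) that cannot be extended to an occurrence of $UtD$; equivalently, each peak $UD$ determines exactly one tower, the maximal $U^iD^i$ centered at it. Towers are colored as follows: Step 1: color every tower whose first step is immediately preceded by a $U$-step; Step 2: color every tower whose first step immediately follows the last step of a tower left uncolored after Step 1; a tower beginning at the first step of $p$ is also colored. $\mathcal{T}(p)$ is the set of colored towers and $\mathcal{T}_2(p)\subseteq\mathcal{T}(p)$ those of height $i\ge2$. The bottom of a tower in $\mathcal{T}_2(p)$ is its first $U$-step. $((\mathcal{T}^s,\mathcal{B}^w),(m,r),D_n)$ is the set of triples $(p,S,R)$ with $p\in D_n$, $S\subseteq\mathcal{T}(p)$, $|S|=m$, $R\subseteq S\cap\mathcal{T}_2(p)$, $|R|=r$ (paths with $m$ colored towers labeled $s$, among which exactly $r$ have their bottom labeled $w$). $((\mathcal{T}^s,\mathcal{T}^w),(m,r),D_n)$ is the set of triples $(p,S,R)$ with $p\in D_n$, $S\subseteq\mathcal{T}(p)$,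 $|S|=m$, $R\subseteq S$, $|R|=r$. $A\simeq B$ means there is a bijection between $A$ and $B$ (both sets empty if the index of $D$ is negative). *)

From HB Require Import structures.
From mathcomp Require Import all_boot all_order all_algebra.
From mathcomp Require Import finmap.
Set Implicit Arguments. Unset Strict Implicit. Unset Printing Implicit Defensive.



Definition word := seq bool.   (* true = U = (1,1), false = D = (1,-1) *)

Definition isDyck (p : word) : bool :=
  all (fun k => count_mem false (take k p) <= count_mem true (take k p))
      (iota 0 (size p).+1)
  && (count_mem true p == count_mem false p).

Definition elevated (n : nat) (p : word) : Prop :=
  exists q : word, [/\ isDyck q, size q = 2 * n & p = true :: rcons q false].

(* Elevated Dyck paths indexed by an integer; empty for a negative index. *)
Definition elevatedZ (k : int) (p : word) : Prop :=
  exists n : nat, k = Posz n /\ elevated n p.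

(* A tower is represented by a pair (j, i): an occurrence of U^i D^i (i >= 1)
   starting at position j (0-based) of p, which cannot be extended to an
   occurrence of U (U^i D^i) D. *)
Definition tower (p : word) (t : nat * nat) : bool :=
  let: (j, i) := t in
  [&& 0 < i, j + 2 * i <= size p,
      all (fun k => nth false p (j + k) == (k < i)) (iota 0 (2 * i))
    & ~~ [&& 0 < j, nth false p j.-1, j + 2 * i < size p
            & ~~ nth false p (j + 2 * i)]].

Definition step1 (p : word) (t : nat * nat) : bool :=
  (0 < fst t) && nth false p (fst t).-1.

(* Colored towers: Step 1, or Step 2 (first step immediately follows the last
   step of a tower left uncolored after Step 1), or the tower begins at the
   first step of p. *)
Definition colored (p : word) (t : nat * nat) : Prop :=
  tower p t /\
  [\/ step1 p t,
      (exists t' : nat * nat,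
          [/\ tower p t', ~~ step1 p t' & fst t' + 2 * snd t' = fst t])
    | fst t = 0].

Definition height_ge2 (t : nat * nat) : bool := 2 <= snd t.

Definition triple := (word * {fset (nat * nat)} * {fset (nat * nat)})%type.

Definition TsBw (n m r : nat) (x : triple) : Prop :=
  let: (p, Sc, Rw) := x in
  [/\ elevated n p,
      {in Sc, forall t, colored p t},
      #|` Sc|%fset = m,
      (Rw `<=` Sc)%fset
    & {in Rw, forall t, height_ge2 t} /\ #|` Rw|%fset = r].

Definition TsTw (k : int) (m r : nat) (x : triple) : Prop :=
  let: (p, Sc, Rw) := x in
  [/\ elevatedZ k p,
      {in Sc, forall t, colored p t},
      #|` Sc|%fset = m,
      (Rw `<=` Sc)%fset
    & #|` Rw|%fset = r].

From HB Require Import structures.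
From mathcomp Require Import all_boot all_order all_algebra.
From mathcomp Require Import finmap zify.
From Stdlib Require Import ClassicalEpsilon ProofIrrelevance.
Set Implicit Arguments. Unset Strict Implicit. Unset Printing Implicit Defensive.

(* Shrinking a tower U^(i+1) D^(i+1) with i >= 1 to U^i D^i removes the peak
   UD in its middle: the path stays elevated and becomes two steps shorter,
   every other tower is left intact or shifted two steps to the left, and
   colorings are preserved, since whether a tower is colored only depends on
   what precedes and follows it.  Growing a tower is the inverse operation.
   The labelled towers are shrunk one at a time, always the rightmost of those
   still to be shrunk; the towers still to be shrunk thus always form the
   leftmost part of the labelled ones, and a step is undone by growing the
   leftmost labelled tower not among them.  After r steps the labels w have
   become plain colored towers on a path of D_(n-r); if r > n, shrinking n of
   them leaves a tower of height >= 2 on the path UD, which is absurd. *)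

(* Counts over [bool] itself rather than [Equality.sort bool]: this is the
   form [simpl] produces, so that [lia] sees the same atoms everywhere. *)
Local Notation cU w := (@count bool (@PredOfSimpl.coerce bool (pred1 true)) w).
Local Notation cD w := (@count bool (@PredOfSimpl.coerce bool (pred1 false)) w).

Fixpoint block (i : nat) : word :=
  if i is i'.+1 then true :: rcons (block i') false else [::].

Lemma blockE i : block i = nseq i true ++ nseq i false.
Proof.
elim: i => //= i ->; rewrite rcons_cat; congr (_ :: _ ++ _).
by elim: i => //= i ->.
Qed.

Arguments block : simpl never.

Lemma size_block i : size (block i) = 2 * i.
Proof. by rewrite blockE size_cat !size_nseq; lia. Qed.

Lemma nth_block i k : nth false (block i) k = (k < i).
Proof.
rewrite blockE nth_cat size_nseq !nth_nseq.
by case: ltnP => // h; rewrite if_same.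
Qed.

Lemma count_block i : cU (block i) = i /\ cD (block i) = i.
Proof. by rewrite blockE !count_cat !count_nseq /=; lia. Qed.

Lemma block_prefix_above i l :
  0 < l < 2 * i -> cD (take l (block i)) < cU (take l (block i)).
Proof.
case/andP=> l_gt0 l_lt; rewrite blockE take_cat size_nseq.
case: (ltnP l i) => l_i; first by rewrite take_nseq ?count_nseq /=; lia.
rewrite take_nseq; last by lia.
by rewrite count_cat [cU _]count_cat !count_nseq /=; lia.
Qed.

Lemma take_size_addn_cat (T : Type) (s1 s2 : seq T) n :
  take (size s1 + n) (s1 ++ s2) = s1 ++ take n s2.
Proof. by rewrite takeD take_size_cat // drop_size_cat. Qed.

Lemma nth_size_addn_cat (T : Type) (x0 : T) (s1 s2 : seq T) n :
  nth x0 (s1 ++ s2) (size s1 + n) = nth x0 s2 n.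
Proof. by rewrite nth_cat ltnNge leq_addr addKn. Qed.

(** * Elevated paths *)

Definition above_axis (w : word) :=
  forall k, 0 < k < size w -> cD (take k w) < cU (take k w).

Lemma elevatedE n p :
  elevated n p <-> [/\ size p = 2 * n + 2, cU p = cD p & above_axis p].
Proof.
split.
  case=> q [/andP[/allP dyck /eqP bal] size_q ->]; rewrite /= size_rcons size_q.
  rewrite -cats1 !count_cat bal /=; split; [lia | lia |].
  move=> [|k] //=; rewrite size_cat /= => k_lt.
  rewrite takel_cat; last by lia.
  by have := dyck k; rewrite mem_iota => /(_ ltac:(lia)) /=; lia.
case: p => [|x p] [size_p bal above]; first by move: size_p; rewrite addn2.
have x_U : x = true.
  have := above 1; rewrite /= take0.
  by case: x {bal above} size_p => //= size_p; apply; lia.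
subst x; case/lastP: p size_p bal above => [|q y]; first by rewrite addn2.
rewrite /= size_rcons -cats1 !count_cat /= => size_q bal above.
have q_le : cD q <= cU q.
  have := above (size q).+1; rewrite /= take_size_cat // size_cat /=.
  by move/(_ ltac:(lia)) => /=; lia.
have y_D : y = false by case: y {above} bal => //=; lia.
subst y; exists q; rewrite cats1; split=> //; last by lia.
apply/andP; split; last by apply/eqP; rewrite /=; lia.
apply/allP=> k; rewrite mem_iota => /andP[_ k_le].
have := above k.+1; rewrite /= takel_cat; last by lia.
by rewrite size_cat /= => /(_ ltac:(lia)) /=; lia.
Qed.

Lemma above_axis_blockE i a b : 0 < i ->
  above_axis (a ++ block i ++ b) <->
  (forall k, 0 < k <= size a -> cD (take k a) < cU (take k a)) /\
  (forall l, l < size b -> cD (a ++ take l b) < cU (a ++ take l b)).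
Proof.
move=> i_gt0; have [cU_blk cD_blk] := count_block i.
have size_w : size (a ++ block i ++ b) = size a + 2 * i + size b.
  by rewrite !size_cat size_block addnA.
rewrite /above_axis size_w; split=> [above | [above_a above_b] k /andP[k_gt0 k_lt]].
  split=> [k /andP[k_gt0 k_le] | l l_lt].
    by have := above k; rewrite takel_cat //; apply; lia.
  have := above (size a + (size (block i) + l)).
  rewrite !take_size_addn_cat !count_cat cU_blk cD_blk size_block.
  by move/(_ ltac:(lia)); lia.
case: (leqP k (size a)) => k_a; first by rewrite takel_cat //; apply: above_a; lia.
rewrite -(subnKC (ltnW k_a)) take_size_addn_cat.
have a_bal : cD a <= cU a.
  case: (posnP (size a)) => [/size0nil -> // | a_gt0].
  by have := above_a (size a); rewrite take_size; move/(_ ltac:(lia)); lia.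
case: (ltnP (k - size a) (2 * i)) => l_i.
  rewrite takel_cat ?size_block ?(ltnW l_i) // count_cat [cU (_ ++ _)]count_cat.
  by have := @block_prefix_above i (k - size a); move/(_ ltac:(lia)); lia.
rewrite -(subnKC l_i) -(size_block i) take_size_addn_cat size_block.
have := above_b (k - size a - 2 * i); rewrite !count_cat cU_blk cD_blk.
by move/(_ ltac:(lia)); lia.
Qed.

Lemma above_axis_block_succ i a b : 0 < i ->
  above_axis (a ++ block i ++ b) <-> above_axis (a ++ block i.+1 ++ b).
Proof.
move=> i_gt0; have i1_gt0 : 0 < i.+1 by [].
by rewrite (above_axis_blockE _ _ i_gt0) (above_axis_blockE _ _ i1_gt0).
Qed.

(** * Towers *)

Definition block_at (p : word) (j h : nat) :=
  forall k, k < 2 * h -> nth false p (j + k) = (k < h).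

Definition extendable (p : word) (j h : nat) :=
  [&& 0 < j, nth false p j.-1, j + 2 * h < size p & ~~ nth false p (j + 2 * h)].

Lemma towerE p j h :
  tower p (j, h) <->
  [/\ 0 < h, j + 2 * h <= size p, block_at p j h & ~~ extendable p j h].
Proof.
rewrite /tower; split.
  by case/and4P=> h_gt0 size_p /allP occ ext; split=> // k k_lt;
    apply/eqP/occ; rewrite mem_iota.
case=> h_gt0 size_p occ ext; apply/and4P; split=> //.
by apply/allP=> k; rewrite mem_iota => /andP[_ k_lt]; apply/eqP/occ.
Qed.

Lemma tower_height_gt0 p t : tower p t -> 0 < t.2.
Proof. by case: t => j h /towerE[]. Qed.

(* Were the first peak strictly to the right, position [jb + hb] (a D of the
   second block) would lie in the U half of the first block, or position [ja]
   (a U of the first) in the D half of the second. *)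
Lemma block_at_peak_le p ja ha jb hb : 0 < ha -> 0 < hb ->
  block_at p ja ha -> block_at p jb hb ->
  ja < jb + 2 * hb -> jb < ja + 2 * ha -> ja + ha <= jb + hb.
Proof.
move=> ha_gt0 hb_gt0 occ_a occ_b ab ba; rewrite leqNgt; apply/negP => peak_lt.
case: (leqP ja (jb + hb)) => ja_le.
  have := occ_a (jb + hb - ja) ltac:(lia); have := occ_b hb ltac:(lia).
  by rewrite subnKC // ltnn => ->; case: ltnP => //; lia.
have := occ_b (ja - jb) ltac:(lia); have := occ_a 0 ltac:(lia).
by rewrite addn0 subnKC ?ha_gt0; [move=> ->; case: ltnP => //; lia | lia].
Qed.

Lemma block_at_extendable p ja ha jb hb : 0 < ha ->
  block_at p jb hb -> jb + 2 * hb <= size p ->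
  ja + ha = jb + hb -> ha < hb -> extendable p ja ha.
Proof.
move=> ha_gt0 occ_b size_p same_peak ha_lt.
have := occ_b (ja.-1 - jb) ltac:(lia); have := occ_b (ja + 2 * ha - jb) ltac:(lia).
rewrite !subnKC; try lia.
by rewrite /extendable => -> ->; apply/and4P; split; lia.
Qed.

Lemma tower_overlap p j1 h1 j2 h2 : tower p (j1, h1) -> tower p (j2, h2) ->
  j1 < j2 + 2 * h2 -> j2 < j1 + 2 * h1 -> j1 = j2 /\ h1 = h2.
Proof.
move=> /towerE[h1_gt0 size1 occ1 ext1] /towerE[h2_gt0 size2 occ2 ext2] lt12 lt21.
have le12 := block_at_peak_le h1_gt0 h2_gt0 occ1 occ2 lt12 lt21.
have le21 := block_at_peak_le h2_gt0 h1_gt0 occ2 occ1 lt21 lt12.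
have eq_h : h1 = h2.
  case: (ltngtP h1 h2) => // h_lt.
    by move: ext1; rewrite (block_at_extendable h1_gt0 occ2 size2 _ h_lt) //; lia.
  by move: ext2; rewrite (block_at_extendable h2_gt0 occ1 size1 _ h_lt) //; lia.
split=> //; lia.
Qed.

Lemma tower_start_inj p t1 t2 : tower p t1 -> tower p t2 -> t1.1 = t2.1 -> t1 = t2.
Proof.
case: t1 t2 => [j1 h1] [j2 h2] tw1 tw2 /= eq_j.
have := tower_height_gt0 tw1; have := tower_height_gt0 tw2 => /= h2_gt0 h1_gt0.
by have [-> ->] := tower_overlap tw1 tw2 ltac:(lia) ltac:(lia).
Qed.

Lemma tower_congr p q j j' h :
  (forall x, x < 2 * h -> nth false p (j + x) = nth false q (j' + x)) ->
  (j + 2 * h <= size p) = (j' + 2 * h <= size q) ->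
  extendable p j h = extendable q j' h ->
  tower p (j, h) = tower q (j', h).
Proof.
move=> same_nth same_size same_ext.
apply/idP/idP => /towerE[h_gt0 size_t occ ext]; apply/towerE; split=> //.
- by rewrite -same_size.
- by move=> k k_lt; rewrite -same_nth ?occ.
- by rewrite -same_ext.
- by rewrite same_size.
- by move=> k k_lt; rewrite same_nth ?occ.
- by rewrite same_ext.
Qed.

Lemma tower_block a b h : tower (a ++ block h ++ b) (size a, h) =
  (0 < h) && ~~ [&& 0 < size a, nth false a (size a).-1, 0 < size b & ~~ nth false b 0].
Proof.
have size_w : size (a ++ block h ++ b) = size a + 2 * h + size b.
  by rewrite !size_cat size_block addnA.
have ext_w : extendable (a ++ block h ++ b) (size a) h =
    [&& 0 < size a, nth false a (size a).-1, 0 < size b & ~~ nth false b 0].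
  rewrite /extendable size_w; case: (posnP (size a)) => [-> //|a_gt0] /=.
  rewrite nth_cat ifT; last by rewrite prednK.
  rewrite catA -(size_block h) -size_cat nth_cat ltnn subnn.
  by rewrite -[X in X < _]addn0 ltn_add2l.
apply/idP/idP => [/towerE[-> _ _]|/andP[h_gt0 not_ext]]; first by rewrite ext_w.
apply/towerE; split; rewrite ?ext_w //; first by rewrite size_w leq_addr.
by move=> k k_lt; rewrite nth_cat ltnNge leq_addr /= addKn nth_cat size_block k_lt
  nth_block.
Qed.

Lemma tower_split w j h : tower w (j, h) ->
  exists a b, w = a ++ block h ++ b /\ size a = j.
Proof.
case/towerE=> _ size_w occ _; exists (take j w), (drop (j + 2 * h) w).
split; last by rewrite size_takel //; lia.
rewrite -{1}(cat_take_drop j w) -(cat_take_drop (2 * h) (drop j w)) drop_drop addnC.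
congr (_ ++ (_ ++ _)); apply: (@eq_from_nth _ false).
  by rewrite size_takel ?size_block // size_drop; lia.
move=> k; rewrite size_takel ?size_drop; last by lia.
by move=> k_lt; rewrite nth_take // nth_drop occ // nth_block.
Qed.

Lemma cat_block_inj (a1 a2 b1 b2 : word) h : size a1 = size a2 ->
  a1 ++ block h ++ b1 = a2 ++ block h ++ b2 -> a1 = a2 /\ b1 = b2.
Proof.
by move=> eq_size /eqP; rewrite eqseq_cat // eqseq_cat // eqxx => /andP[/eqP -> /eqP ->].
Qed.


Local Open Scope fset_scope.
(* [fset_scope] also binds [+]; keep arithmetic on natural numbers. *)
Local Open Scope nat_scope.

Lemma fset_arg_max (T : choiceType) (A : {fset T}) (f : T -> nat) :
  A != fset0 -> exists2 w, w \in A & {in A, forall u, f u <= f w}.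
Proof.
case/fset0Pn=> x0 x0A.
case: (@arg_maxnP A [` x0A] xpredT (fun u => f (val u))) => // w _ w_max.
by exists (val w) => [|u uA]; [exact: fsvalP | exact: (w_max [` uA])].
Qed.

Lemma fset_arg_min (T : choiceType) (A : {fset T}) (f : T -> nat) :
  A != fset0 -> exists2 w, w \in A & {in A, forall u, f w <= f u}.
Proof.
case/fset0Pn=> x0 x0A.
case: (@arg_minnP A [` x0A] xpredT (fun u => f (val u))) => // w _ w_min.
by exists (val w) => [|u uA]; [exact: fsvalP | exact: (w_min [` uA])].
Qed.

Lemma imfsetS (T T' : choiceType) (f : T -> T') (A B : {fset T}) :
  A `<=` B -> f @` A `<=` f @` B.
Proof.
by move/fsubsetP=> AB; apply/fsubsetP=> _ /imfsetP[t /AB tB ->]; apply: in_imfset.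
Qed.

Lemma card_in_imfset_fset (T T' : choiceType) (f : T -> T') (A : {fset T}) :
  {in A &, injective f} -> #|` f @` A| = #|` A|.
Proof. by move=> f_inj; rewrite card_in_imfset. Qed.

Lemma imfset_can (T : choiceType) (f g : T -> T) (A : {fset T}) :
  {in A, cancel f g} -> g @` (f @` A) = A.
Proof.
move=> fK; apply/fsetP=> x; apply/imfsetP/idP => [[y /imfsetP[z zA ->] ->]|xA].
  by rewrite fK.
by exists (f x); [apply: in_imfset | rewrite fK].
Qed.

Definition marked (n m r : nat) (p : word) (S R : {fset nat * nat}) : Prop :=
  [/\ elevated n p, {in S, forall t, colored p t}, #|` S| = m, R `<=` S & #|` R| = r].

Lemma marked_towers n m r p S R :
  marked n m r p S R -> {in S, forall t, tower p t} /\ {in R, forall t, tower p t}.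
Proof.
case=> _ col _ /fsubsetP RS _.
by split=> [t /col[] | t /RS /col[]].
Qed.

Lemma tower_trichotomy p j0 h0 j h : tower p (j0, h0) -> tower p (j, h) ->
  [\/ (j, h) = (j0, h0), j + 2 * h <= j0 | j0 + 2 * h0 <= j].
Proof.
move=> tw0 tw.
case: (leqP (j0 + 2 * h0) j) => [|lt0]; first by constructor 3.
case: (leqP (j + 2 * h) j0) => [|lt]; first by constructor 2.
by have [-> ->] := tower_overlap tw tw0 lt0 lt; constructor 1.
Qed.

(** * Shrinking a tower by one level *)

Definition shift (j k : nat) := if k <= j then k else k.+2.

Definition shrink (j : nat) (t : nat * nat) : nat * nat :=
  if t.1 < j then t else if t.1 == j then (j, t.2.-1) else (t.1 - 2, t.2).

Definition grow (j : nat) (t : nat * nat) : nat * nat :=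
  if t.1 < j then t else if t.1 == j then (j, t.2.+1) else (t.1.+2, t.2).

Lemma shift_inj j : injective (shift j).
Proof. by move=> x y; rewrite /shift; case: (leqP x j); case: (leqP y j); lia. Qed.

Lemma ltn_shift j : {mono shift j : x y / x < y}.
Proof.
by move=> x y; rewrite /shift; case: (leqP x j); case: (leqP y j) => ? ?;
  apply/idP/idP; lia.
Qed.

Lemma grow_fst j t : (grow j t).1 = shift j t.1.
Proof. by case: t => x h; rewrite /grow /shift /=; case: ltngtP => // ->. Qed.

Lemma shrink_before j j' h : j' < j -> shrink j (j', h) = (j', h).
Proof. by rewrite /shrink /= => ->. Qed.

Lemma grow_before j j' h : j' < j -> grow j (j', h) = (j', h).
Proof. by rewrite /grow /= => ->. Qed.

Lemma shrink_at j h : shrink j (j, h) = (j, h.-1).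
Proof. by rewrite /shrink /= ltnn eqxx. Qed.

Lemma grow_at j h : grow j (j, h) = (j, h.+1).
Proof. by rewrite /grow /= ltnn eqxx. Qed.

Lemma shrink_after j j' h : j < j' -> shrink j (j', h) = (j' - 2, h).
Proof. by move=> lt; rewrite /shrink /= ltnNge ltnW //= gtn_eqF. Qed.

Lemma grow_after j j' h : j < j' -> grow j (j', h) = (j'.+2, h).
Proof. by move=> lt; rewrite /grow /= ltnNge ltnW //= gtn_eqF. Qed.

Lemma grow_height j t : t.2 <= (grow j t).2.
Proof. by rewrite /grow; case: ltnP => //= _; case: eqP. Qed.

Section Shrink.
Variables (a b : word) (i : nat).
Hypothesis i_gt0 : 0 < i.
Local Notation j := (size a).
Local Notation p := (a ++ block i.+1 ++ b).
Local Notation q := (a ++ block i ++ b).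

Lemma size_shrink : size p = (size q).+2.
Proof. by rewrite !size_cat !size_block; lia. Qed.

Lemma nth_shrink_before x : x <= j -> nth false p x = nth false q x.
Proof.
move=> x_le; rewrite !nth_cat; case: (ltnP x j) => // x_ge.
by rewrite (_ : x - j = 0); [case: i i_gt0 | lia].
Qed.

Lemma nth_shrink_after x : j + 2 * i <= x.+1 -> nth false q x = nth false p x.+2.
Proof.
move=> x_ge; have [y eq_x] : exists y, x = j + y by exists (x - j); lia.
subst x.
rewrite -!addnS !nth_size_addn_cat !nth_cat !size_block !nth_block.
case: (ltnP y (2 * i)) => lt1; case: (ltnP y.+2 (2 * i.+1)) => lt2; try lia.
by congr nth; lia.
Qed.

Lemma tower_shrink_block : tower p (j, i.+1) = tower q (j, i).
Proof. by rewrite !tower_block i_gt0. Qed.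

Lemma tower_shrink_left j' h : j' + 2 * h <= j -> tower p (j', h) = tower q (j', h).
Proof.
move=> le_j; have j_lt : j < size q by rewrite !size_cat size_block; lia.
apply: tower_congr.
- by move=> x x_lt; apply: nth_shrink_before; lia.
- by rewrite size_shrink; apply/idP/idP; lia.
- by rewrite /extendable !nth_shrink_before ?size_shrink; lia.
Qed.

Lemma tower_shrink_right j' h : j + 2 * i <= j' -> tower q (j', h) = tower p (j'.+2, h).
Proof.
move=> ge_j; apply: tower_congr.
- by move=> x _; rewrite nth_shrink_after; [congr nth; lia | lia].
- by rewrite size_shrink !addSn !ltnS.
- rewrite /extendable !nth_shrink_after; try lia.
  rewrite size_shrink !addSn !ltnS prednK; last by lia.
  by rewrite (_ : 0 < j'); last by lia.
Qed.

Lemma elevated_shrink n : elevated n.+1 p <-> elevated n q.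
Proof.
have [cU_q cD_q] := count_block i; have [cU_p cD_p] := count_block i.+1.
rewrite !elevatedE size_shrink !count_cat cU_q cD_q cU_p cD_p.
by split=> -[? ? /(above_axis_block_succ _ _ i_gt0) ?]; split=> //; lia.
Qed.

Hypothesis tower_p : tower p (j, i.+1).

Lemma tower_q : tower q (j, i).
Proof. by rewrite -tower_shrink_block. Qed.

Lemma tower_shrink t : tower p t -> tower q (shrink j t) /\ grow j (shrink j t) = t.
Proof.
case: t => [j' h] tw; have /= h_gt0 := tower_height_gt0 tw.
case: (tower_trichotomy tower_p tw) => [[-> ->]|le|ge].
- by rewrite shrink_at grow_at tower_q.
- have lt_j : j' < j by lia.
  by rewrite shrink_before // grow_before // -tower_shrink_left.
- have e : (j' - 2).+2 = j' by lia.
  rewrite shrink_after ?grow_after ?e; [|lia|lia].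
  by rewrite tower_shrink_right ?e //; lia.
Qed.

Lemma tower_grow t : tower q t -> tower p (grow j t) /\ shrink j (grow j t) = t.
Proof.
case: t => [j' h] tw; have /= h_gt0 := tower_height_gt0 tw.
case: (tower_trichotomy tower_q tw) => [[-> ->]|le|ge].
- by rewrite grow_at shrink_at tower_p.
- have lt_j : j' < j by lia.
  by rewrite grow_before // shrink_before // tower_shrink_left.
- have gt_j : j < j' by lia.
  rewrite grow_after // shrink_after; last by lia.
  by rewrite subSS subSS subn0 -tower_shrink_right.
Qed.

Lemma step1_grow t : tower q t -> step1 q t = step1 p (grow j t).
Proof.
case: t => [j' h] tw; have /= h_gt0 := tower_height_gt0 tw.
case: (tower_trichotomy tower_q tw) => [[-> ->]|le|ge].
- rewrite grow_at /step1 /=; case: (posnP j) => // j_gt0.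
  by rewrite nth_shrink_before //; lia.
- rewrite grow_before /step1 /=; last by lia.
  by case: (posnP j') => //= j'_gt0; rewrite nth_shrink_before //; lia.
- rewrite grow_after /step1 /=; last by lia.
  by rewrite (_ : 0 < j') ?nth_shrink_after ?prednK //; lia.
Qed.

Lemma tower_end_grow t : tower q t ->
  (grow j t).1 + 2 * (grow j t).2 = shift j (t.1 + 2 * t.2).
Proof.
case: t => [j' h] tw; have /= h_gt0 := tower_height_gt0 tw; rewrite /shift.
case: (tower_trichotomy tower_q tw) => [[-> ->]|le|ge].
- by rewrite grow_at /=; case: leqP; lia.
- by rewrite grow_before /=; case: leqP; lia.
- by rewrite grow_after /=; case: leqP; lia.
Qed.

Lemma colored_grow t : tower q t -> colored q t <-> colored p (grow j t).
Proof.
move=> tw; have [tw' _] := tower_grow tw.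
rewrite /colored; split=> [[_ col] | [_ col]]; split=> //.
  case: col => [s1 | [u [tw_u s1 end_u]] | start0].
  - by constructor 1; rewrite -step1_grow.
  - constructor 2; exists (grow j u); have [tw_u' _] := tower_grow tw_u.
    by rewrite -step1_grow // tower_end_grow // end_u grow_fst.
  - by constructor 3; rewrite grow_fst /shift start0.
case: col => [s1 | [u [tw_u s1 end_u]] | start0].
- by constructor 1; rewrite step1_grow.
- constructor 2; have [tw_u' grow_u] := tower_shrink tw_u; exists (shrink j u).
  split=> //; first by rewrite step1_grow // grow_u.
  by apply: (@shift_inj j); rewrite -tower_end_grow // -grow_fst grow_u.
- by constructor 3; move: start0; rewrite grow_fst /shift; case: leqP.
Qed.

Lemma colored_shrink t : tower p t -> colored p t <-> colored q (shrink j t).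
Proof.
by move=> tw; have [tw' grow_t] := tower_shrink tw; rewrite colored_grow // grow_t.
Qed.

Lemma ltn_shrink t1 t2 : tower p t1 -> tower p t2 ->
  t1.1 < t2.1 -> (shrink j t1).1 < (shrink j t2).1.
Proof.
move=> tw1 tw2; rewrite -{1}(tower_shrink tw1).2 -{1}(tower_shrink tw2).2.
by rewrite !grow_fst ltn_shift.
Qed.

Lemma shrink_height t : tower p t -> t <> (j, i.+1) -> (shrink j t).2 = t.2.
Proof.
move=> tw neq; rewrite /shrink; case: ltngtP => // eq_j.
by case: neq; apply: tower_start_inj tw tower_p _.
Qed.

Lemma shrink_inj (F : {fset nat * nat}) :
  {in F, forall t, tower p t} -> {in F &, injective (shrink j)}.
Proof.
move=> twF x y xF yF eq_xy.
by rewrite -(tower_shrink (twF x xF)).2 eq_xy (tower_shrink (twF y yF)).2.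
Qed.

Lemma grow_inj (F : {fset nat * nat}) :
  {in F, forall t, tower q t} -> {in F &, injective (grow j)}.
Proof.
move=> twF x y xF yF eq_xy.
by rewrite -(tower_grow (twF x xF)).2 eq_xy (tower_grow (twF y yF)).2.
Qed.

Lemma grow_shrinkK (F : {fset nat * nat}) :
  {in F, forall t, tower p t} -> grow j @` (shrink j @` F) = F.
Proof. by move=> twF; apply: imfset_can => t /twF /tower_shrink[]. Qed.

Lemma shrink_growK (F : {fset nat * nat}) :
  {in F, forall t, tower q t} -> shrink j @` (grow j @` F) = F.
Proof. by move=> twF; apply: imfset_can => t /twF /tower_grow[]. Qed.

Lemma marked_shrink n m r S R :
  marked n.+1 m r p S R -> marked n m r q (shrink j @` S) (shrink j @` R).
Proof.
move=> mk; have [twS twR] := marked_towers mk; case: mk => elev col cardS RS cardR.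
split.
- exact/elevated_shrink.
- by move=> _ /imfsetP[t tS ->]; apply/colored_shrink; [exact: twS | exact: col].
- by rewrite card_in_imfset_fset //; apply: shrink_inj.
- exact: imfsetS.
- by rewrite card_in_imfset_fset //; apply: shrink_inj.
Qed.

Lemma marked_grow n m r S R :
  marked n m r q S R -> marked n.+1 m r p (grow j @` S) (grow j @` R).
Proof.
move=> mk; have [twS twR] := marked_towers mk; case: mk => elev col cardS RS cardR.
split.
- exact/elevated_shrink.
- by move=> _ /imfsetP[t tS ->]; apply/colored_grow; [exact: twS | exact: col].
- by rewrite card_in_imfset_fset //; apply: grow_inj.
- exact: imfsetS.
- by rewrite card_in_imfset_fset //; apply: grow_inj.
Qed.

End Shrink.

(** * Shrinking the labelled towers one at a time *)

Definition quad := (word * {fset nat * nat} * {fset nat * nat} * {fset nat * nat})%type.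

(* [W] holds the labelled towers still to be shrunk: the leftmost [k] towers
   of [R], all of height at least 2. *)
Definition stage (n m r k : nat) (x : quad) : Prop :=
  let: (p, Sc, R, W) := x in
  marked n m r p Sc R /\
  [/\ W `<=` R, #|` W| = k, {in W, forall t, height_ge2 t}
    & {in W, forall w, {in R `\` W, forall z, w.1 < z.1}}].

Definition shrink_step_at (a b : word) (i : nat) (x y : quad) : Prop :=
  let: (p, Sc, R, W) := x in let: (q, Sc', R', W') := y in
  [/\ 0 < i, p = a ++ block i.+1 ++ b, q = a ++ block i ++ b,
      (size a, i.+1) \in W & {in W, forall u, u.1 <= size a}] /\
  [/\ Sc' = shrink (size a) @` Sc, R' = shrink (size a) @` R
    & W' = shrink (size a) @` (W `\ (size a, i.+1))].

Definition shrink_step (x y : quad) : Prop := exists a b i, shrink_step_at a b i x y.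

Lemma stage_towers n m r k p Sc R W : stage n m r k (p, Sc, R, W) ->
  [/\ {in Sc, forall t, tower p t}, {in R, forall t, tower p t}
    & {in W, forall t, tower p t}].
Proof.
case=> /marked_towers[twS twR] [/fsubsetP WR _ _ _].
by split=> // t /WR; apply: twR.
Qed.

Lemma stage_shrink n m r k x :
  stage n.+1 m r k.+1 x -> exists y, stage n m r k y /\ shrink_step x y.
Proof.
case: x => [[[p Sc] R] W] st; have [_ twR twW] := stage_towers st.
case: st => mk [WR cardW hW leftW].
have [[j h] wW w_max] : exists2 w, w \in W & {in W, forall u, u.1 <= w.1}.
  by apply: fset_arg_max; apply/eqP => W0; move: cardW; rewrite W0 cardfs0.
have tw := twW _ wW; have h_ge2 : 2 <= h := hW _ wW.
have [i eq_h] : exists i, h = i.+1 by exists h.-1; lia.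
subst h; have i_gt0 : 0 < i by lia.
have [a [b [eq_p eq_j]]] := tower_split tw; subst p j.
set W' := W `\ (size a, i.+1).
have twW' : {in W', forall t, tower (a ++ block i.+1 ++ b) t}.
  by move=> t /fsetD1P[_ /twW].
exists (a ++ block i ++ b, shrink (size a) @` Sc, shrink (size a) @` R,
  shrink (size a) @` W').
split; last by exists a, b, i.
split; first exact: (marked_shrink i_gt0 tw mk).
split.
- by apply: imfsetS; apply: fsubset_trans WR; apply: fsubsetDl.
- rewrite card_in_imfset_fset; last exact: (shrink_inj i_gt0 tw twW').
  by move: cardW; rewrite (cardfsD1 (size a, i.+1)) wW add1n => -[].
- move=> _ /imfsetP[t /fsetD1P[neq_t tW] ->].
  by rewrite /height_ge2 (shrink_height tw (twW _ tW)); [exact: hW | exact/eqP].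
- move=> _ /imfsetP[u /fsetD1P[neq_u uW] ->].
  move=> _ /fsetDP[/imfsetP[z zR ->] z_notin].
  apply: (ltn_shrink i_gt0 tw (twW _ uW) (twR _ zR)).
  have zW' : z \notin W' by apply: contra z_notin => zW'; apply: in_imfset.
  case: (eqVneq z (size a, i.+1)) => [-> | neq_z].
    rewrite ltn_neqAle w_max // andbT; apply/eqP => eq_start.
    by move/eqP: neq_u; apply; apply: tower_start_inj (twW _ uW) tw _.
  apply: leftW => //; apply/fsetDP; split=> //.
  by apply: contra zW' => zW; apply/fsetD1P.
Qed.

Lemma stage_grow n m r k y : k < r ->
  stage n m r k y -> exists x, stage n.+1 m r k.+1 x /\ shrink_step x y.
Proof.
case: y => [[[q Sc] R] W] k_lt st; have [twS twR twW] := stage_towers st.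
case: st => mk [WR cardW hW leftW]; have cardR : #|` R| = r by case: mk.
have [[j i] zRW z_min] :
    exists2 z, z \in R `\` W & {in R `\` W, forall u, z.1 <= u.1}.
  apply: fset_arg_min; apply/fset0Pn.
  have /fsubsetPn[z zR zW] : ~~ (R `<=` W).
    by apply: contraL k_lt => /fsubset_leq_card; rewrite cardW cardR leqNgt.
  by exists z; apply/fsetDP.
case/fsetDP: (zRW) => zR _; have tw := twR _ zR.
have /= i_gt0 := tower_height_gt0 tw.
have [a [b [eq_q eq_j]]] := tower_split tw; subst q j.
have tw_p : tower (a ++ block i.+1 ++ b) (size a, i.+1).
  by rewrite tower_shrink_block.
have W_left : {in W, forall u, u.1 < size a}.
  by move=> u uW; apply: (leftW _ uW _ zRW).
set W' := (size a, i.+1) |` grow (size a) @` W.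
have new_notin : (size a, i.+1) \notin grow (size a) @` W.
  apply/imfsetP => -[[j' h] uW]; have /= lt_j' := W_left _ uW.
  by rewrite grow_before // => -[eq_j _]; move: lt_j'; rewrite eq_j ltnn.
exists (a ++ block i.+1 ++ b, grow (size a) @` Sc, grow (size a) @` R, W').
split.
  split; first exact: (marked_grow i_gt0 tw_p mk).
  split.
  - rewrite fsubUset fsub1set -(grow_at (size a) i) in_imfset //=.
    exact: imfsetS.
  - rewrite cardfsU1 new_notin card_in_imfset_fset ?cardW //.
    exact: (grow_inj i_gt0 tw_p).
  - move=> t /fset1UP[-> | /imfsetP[u uW ->]]; first by rewrite /height_ge2 /=; lia.
    exact: leq_trans (hW u uW) (grow_height _ _).
  - move=> w w_in _ /fsetDP[/imfsetP[t tR ->] t_notin].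
    have tW : t \notin W.
      by apply: contra t_notin => tW; rewrite in_fset1U in_imfset ?orbT.
    have lt_t : size a < t.1.
      rewrite ltn_neqAle z_min ?andbT; last by apply/fsetDP.
      apply: contra t_notin => /eqP eq_start.
      by rewrite -(tower_start_inj tw (twR _ tR) eq_start) grow_at fset1U1.
    case/fset1UP: w_in => [-> | /imfsetP[u uW ->]].
      by rewrite -(grow_at _ i) !grow_fst ltn_shift.
    by rewrite !grow_fst ltn_shift leftW //; apply/fsetDP.
exists a, b, i; split; split=> //.
- exact: fset1U1.
- move=> _ /fset1UP[-> // | /imfsetP[[j' h] uW ->]].
  by have /= /ltnW le_j := W_left _ uW; rewrite grow_fst /shift le_j.
- by rewrite (shrink_growK i_gt0 tw_p twS).
- by rewrite (shrink_growK i_gt0 tw_p twR).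
- by rewrite fsetU1K // (shrink_growK i_gt0 tw_p twW).
Qed.

Lemma shrink_step_functional n m r k x y1 y2 :
  stage n.+1 m r k.+1 x -> shrink_step x y1 -> shrink_step x y2 -> y1 = y2.
Proof.
case: x => [[[p Sc] R] W] st; have [_ _ twW] := stage_towers st.
case: y1 => [[[q1 Sc1] R1] W1]; case: y2 => [[[q2 Sc2] R2] W2].
move=> [a1 [b1 [i1 [[_ eq_p1 -> w1W w1_max] [-> -> ->]]]]].
move=> [a2 [b2 [i2 [[_ eq_p2 -> w2W w2_max] [-> -> ->]]]]].
have eq_size : size a1 = size a2.
  by apply/eqP; rewrite eqn_leq (w2_max _ w1W) (w1_max _ w2W).
have [_ eq_i] : (size a1, i1.+1) = (size a2, i2.+1).
  exact: tower_start_inj (twW _ w1W) (twW _ w2W) eq_size.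
subst i2.
by have [-> ->] := cat_block_inj eq_size (etrans (esym eq_p1) eq_p2).
Qed.

Lemma shrink_step_at_leftmost n m r k a b i p Sc R W q Sc' R' W' :
  stage n.+1 m r k.+1 (p, Sc, R, W) ->
  shrink_step_at a b i (p, Sc, R, W) (q, Sc', R', W') ->
  (size a, i) \in R' `\` W' /\ {in R' `\` W', forall z, size a <= z.1}.
Proof.
move=> st; have [_ twR twW] := stage_towers st.
case: st => _ [/fsubsetP WR _ _ leftW].
move=> [[i_gt0 eq_p _ wW _] [_ -> ->]]; subst p; have tw := twW _ wW.
have shrink_w : shrink (size a) (size a, i.+1) = (size a, i) by rewrite shrink_at.
split.
  rewrite in_fsetD -shrink_w; apply/andP; split; last by apply/in_imfset/WR.
  apply/imfsetP=> -[u /fsetD1P[neq_u uW] eq_u]; move/eqP: neq_u; apply.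
  by apply: (shrink_inj i_gt0 tw twR); rewrite ?WR.
move=> _ /fsetDP[/imfsetP[z zR ->] z_notin].
case: (eqVneq z (size a, i.+1)) => [-> | neq_z]; first by rewrite shrink_w.
apply: ltnW; rewrite -[X in X < _]/((size a, i).1) -shrink_w.
apply: (ltn_shrink i_gt0 tw tw (twR _ zR)).
apply: leftW => //; apply/fsetDP; split=> //.
by apply: contra z_notin => zW; apply: in_imfset; apply/fsetD1P.
Qed.

Lemma shrink_step_injective n m r k x1 x2 y :
  stage n.+1 m r k.+1 x1 -> stage n.+1 m r k.+1 x2 -> stage n m r k y ->
  shrink_step x1 y -> shrink_step x2 y -> x1 = x2.
Proof.
case: x1 x2 y => [[[p1 Sc1] R1] W1] [[[p2 Sc2] R2] W2] [[[q Sc'] R'] W'].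
move=> st1 st2 sty.
have [_ twR' _] := stage_towers sty.
move=> [a1 [b1 [i1 rel1]]] [a2 [b2 [i2 rel2]]].
have [t1 t1_min] := shrink_step_at_leftmost st1 rel1.
have [t2 t2_min] := shrink_step_at_leftmost st2 rel2.
have eq_size : size a1 = size a2.
  by apply/eqP; rewrite eqn_leq (t1_min _ t2) (t2_min _ t1).
have [_ eq_i] : (size a1, i1) = (size a2, i2).
  case/fsetDP: t1 => /twR' t1 _; case/fsetDP: t2 => /twR' t2 _.
  exact: tower_start_inj t1 t2 eq_size.
subst i2; case: rel1 rel2 => [[i_gt0 eq_p1 eq_q1 w1W _] [eSc1 eR1 eW1]].
move=> [[_ eq_p2 eq_q2 w2W _] [eSc2 eR2 eW2]].
have [eq_a eq_b] := cat_block_inj eq_size (etrans (esym eq_q1) eq_q2).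
subst a2 b2 p1 p2.
have [twS1 twR1 twW1] := stage_towers st1; have [twS2 twR2 twW2] := stage_towers st2.
have tw := twW1 _ w1W.
set p := a1 ++ block i1.+1 ++ b1.
have twW1' : {in W1 `\ (size a1, i1.+1), forall t, tower p t}.
  by move=> t /fsetD1P[_ /twW1].
have twW2' : {in W2 `\ (size a1, i1.+1), forall t, tower p t}.
  by move=> t /fsetD1P[_ /twW2].
congr (_, _, _, _).
- rewrite -(grow_shrinkK i_gt0 tw twS1) -(grow_shrinkK i_gt0 tw twS2).
  by rewrite -eSc1 -eSc2.
- rewrite -(grow_shrinkK i_gt0 tw twR1) -(grow_shrinkK i_gt0 tw twR2).
  by rewrite -eR1 -eR2.
rewrite -(fsetD1K w1W) -(fsetD1K w2W) -(grow_shrinkK i_gt0 tw twW1').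
by rewrite -(grow_shrinkK i_gt0 tw twW2') -eW1 -eW2.
Qed.

(** * Assembling the bijection *)

Definition equipotent (A B : Type) := exists f : A -> B, bijective f.

Lemma equipotent_trans A B C : equipotent A B -> equipotent B C -> equipotent A C.
Proof. by case=> f f_bij [g g_bij]; exists (g \o f); apply: bij_comp. Qed.

Lemma equipotent_empty A B : (A -> False) -> (B -> False) -> equipotent A B.
Proof.
move=> A0 B0; exists (fun x => False_rect B (A0 x)).
by exists (fun y => False_rect A (B0 y)) => [x | y]; [case: (A0 x) | case: (B0 y)].
Qed.

Lemma equipotent_sig_rel X Y (P : X -> Prop) (Q : Y -> Prop) (Rel : X -> Y -> Prop) :
  (forall x, P x -> exists y, Q y /\ Rel x y) ->
  (forall y, Q y -> exists x, P x /\ Rel x y) ->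
  (forall x y1 y2, P x -> Q y1 -> Q y2 -> Rel x y1 -> Rel x y2 -> y1 = y2) ->
  (forall x1 x2 y, P x1 -> P x2 -> Q y -> Rel x1 y -> Rel x2 y -> x1 = x2) ->
  equipotent {x | P x} {y | Q y}.
Proof.
move=> total surj func inj.
have sval_inj Z (T : Z -> Prop) (u v : {z | T z}) : sval u = sval v -> u = v.
  by case: u v => [z tz] [z' tz'] /= eq_z; apply: subset_eq_compat.
have F (x : {x | P x}) : {y : {y | Q y} | Rel (sval x) (sval y)}.
  have [y [qy rxy]] := constructive_indefinite_description _ (total _ (svalP x)).
  by exists (exist _ y qy).
have G (y : {y | Q y}) : {x : {x | P x} | Rel (sval x) (sval y)}.
  have [x [px rxy]] := constructive_indefinite_description _ (surj _ (svalP y)).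
  by exists (exist _ x px).
exists (fun x => sval (F x)); exists (fun y => sval (G y)) => [x | y]; apply: sval_inj.
- exact: inj (svalP _) (svalP _) (svalP _) (svalP (G _)) (svalP (F x)).
- exact: func (svalP _) (svalP _) (svalP _) (svalP (F _)) (svalP (G y)).
Qed.

Lemma stage_succ_equipotent n m r k : k < r ->
  equipotent {x | stage n.+1 m r k.+1 x} {y | stage n m r k y}.
Proof.
move=> k_lt; apply: (equipotent_sig_rel (Rel := shrink_step)).
- exact: stage_shrink.
- by move=> y; apply: stage_grow.
- by move=> x y1 y2 stx _ _; apply: shrink_step_functional stx.
- by move=> x1 x2 y st1 st2 sty; apply: shrink_step_injective st1 st2 sty.
Qed.

Lemma stage_iter_equipotent m r d k n : d + k <= r ->
  equipotent {x | stage (n + k) m r (d + k) x} {y | stage n m r d y}.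
Proof.
elim: k => [|k IHk] le_r; first by rewrite !addn0; exists id; exists id.
rewrite !addnS; apply: (@equipotent_trans _ {x | stage (n + k) m r (d + k) x}).
  by apply: stage_succ_equipotent; lia.
by apply: IHk; lia.
Qed.

Lemma stage0_empty m r d x : ~ stage 0 m r d.+1 x.
Proof.
case: x => [[[p Sc] R] W] st; have [_ _ twW] := stage_towers st.
case: st => -[/elevatedE[size_p _ _] _ _ _ _] [_ cardW hW _].
have /fset0Pn[[j h] wW] : W != fset0.
  by apply/eqP => W0; move: cardW; rewrite W0 cardfs0.
have /towerE[_ size_t _ _] := twW _ wW; have := hW _ wW.
by rewrite /height_ge2 /=; lia.
Qed.

Lemma TsBw_stage_equipotent n m r :
  equipotent {x | TsBw n m r x} {y | stage n m r r y}.
Proof.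
apply: (equipotent_sig_rel
  (Rel := fun x (y : quad) => let: (p, Sc, R) := x in y = (p, Sc, R, R))).
- case=> [[p Sc] R] [elev col cardS RS [hR cardR]]; exists (p, Sc, R, R).
  split=> //; split; first by split.
  by split=> // w _ z; rewrite fsetDv inE.
- case=> [[[p Sc] R] W] [mk [WR cardW hW _]].
  have cardR : #|` R| = r by case: mk.
  have eq_W : W = R by apply/eqP; rewrite eqEfcard WR cardW cardR leqnn.
  by subst W; case: mk => elev col cardS RS _; exists (p, Sc, R).
- by case=> [[p Sc] R] y1 y2 _ _ _ -> ->.
- by case=> [[p1 Sc1] R1] [[p2 Sc2] R2] y _ _ _ -> [-> -> ->].
Qed.

Lemma stage_TsTw_equipotent n m r :
  equipotent {y | stage n m r 0 y} {x | TsTw (Posz n) m r x}.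
Proof.
apply: (equipotent_sig_rel
  (Rel := fun (y : quad) x => let: (p, Sc, R, W) := y in x = (p, Sc, R))).
- case=> [[[p Sc] R] W] [[elev col cardS RS cardR] _]; exists (p, Sc, R).
  by split=> //; split=> //; exists n.
- case=> [[p Sc] R] [[n' [[<-] elev]] col cardS RS cardR].
  by exists (p, Sc, R, fset0); split=> //; split; split=> //; rewrite fsub0set.
- by case=> [[[p Sc] R] W] y1 y2 _ _ _ -> ->.
- move=> [[[p1 Sc1] R1] W1] [[[p2 Sc2] R2] W2] y [_ [_ /cardfs0_eq -> _ _]].
  by move=> [_ [_ /cardfs0_eq -> _ _]] _ -> [-> -> ->].
Qed.

Lemma stage_full_empty n m r : n < r -> {x | stage n m r r x} -> False.
Proof.
move=> lt_nr; have := @stage_iter_equipotent m r (r - n) n 0.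
rewrite add0n subnK; last exact: ltnW.
case/(_ (leqnn r)) => shrink_all _ /shrink_all[y].
by rewrite -[r - n]prednK ?subn_gt0 //; apply: stage0_empty.
Qed.

Lemma TsTw_neg_empty n m r : n < r -> {x | TsTw (Posz n - Posz r)%R m r x} -> False.
Proof. by move=> lt_nr [[[p Sc] R] [[n' [eq_n _]] _ _ _ _]]; move: eq_n; lia. Qed.

Theorem lemma2p2 (n m r : nat) :
  exists f : {x : triple | TsBw n m r x} ->
             {x : triple | TsTw (Posz n - Posz r)%R m r x},
    bijective f.
Proof.
apply: equipotent_trans (TsBw_stage_equipotent n m r) _.
case: (leqP r n) => [le_rn | lt_nr].
  rewrite subzn // -{1}(subnK le_rn).
  exact: equipotent_trans (@stage_iter_equipotent m r 0 r (n - r) (leqnn r))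
    (stage_TsTw_equipotent _ _ _).
by apply: equipotent_empty; [apply: stage_full_empty | apply: TsTw_neg_empty].
Qed.
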